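(* Consider two spiking layers $\hat\sigma$ and $\tilde\sigma$, each of width $N$ (same threshold $u_{th}$, reset $V_{reset}$, decay $\beta\in(0,1)$, applied coordinatewise), with the same initial temporal input vector $\tilde{\boldsymbol h}^0=\hat{\boldsymbol h}^0$, receiving spatial input feature vectors $\hat{\boldsymbol x}^t,\tilde{\boldsymbol x}^t\in\mathbb{R}^N$, $t=1,\dots,T$. Suppose each coordinate of $\hat{\boldsymbol u}^t=\hat{\boldsymbol h}^{t-1}+\hat{\boldsymbol x}^t$ is a random variable following a $u_{th}$-Neighborhood-Finite Distribution, that $|\tilde x^t_k-\hat x^t_k|\le\epsilon$ for all $k=1,\dots,N$ and $t=1,\dots,T$, and that $\hat\sigma^t(\hat{\boldsymbol x}^t)=\tilde\sigma^t(\tilde{\boldsymbol x}^t)$ for $t=1,\dots,T-1$. Then $P[\hat\sigma^T(\hat{\boldsymbol x}^T)\neq\tilde\sigma^T(\tilde{\boldsymbol x}^T)]$ has an upper bound proportional to $N\frac{\epsilon}{1-\beta}$ (i.e. it is at most a constant multiple of $N\frac{\epsilon}{1-\beta}$, the constant depending only on the distributions of the coordinates of $\hat{\boldsymbol u}^T$).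
   Context: A LIF spiking neuron with firing threshold $u_{th}$, reset potential $V_{reset}$ and decay factor $\beta\in(0,1)$ receives spatial input features $x^1,x^2,\dots$ and evolves by $u^t=h^{t-1}+x^t$, $s^t=\mathrm{Hea}(u^t-u_{th})$, $h^t=V_{reset}s^t+\beta u^t(1-s^t)$, where $\mathrm{Hea}(y)=1$ if $y\ge0$ and $0$ otherwise; the output at timestep $t$ is $\sigma^t(x^t)=s^t$. A spiking layer of width $N$ consists of $N$ such neurons acting independently on the coordinates of a vector input. A probability density $p$ is an $m$-Neighborhood-Finite Distribution if there exists $\epsilon>0$ with $\sup_{x\in[m-\epsilon,m+\epsilon]}p(x)<+\infty$. *)

From HB Require Import structures.
From mathcomp Require Import all_boot all_order all_algebra.
From mathcomp Require Import all_classical all_reals all_analysis.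
Set Implicit Arguments. Unset Strict Implicit. Unset Printing Implicit Defensive.
Import Order.TTheory GRing.Theory Num.Theory.
Local Open Scope classical_set_scope.
Local Open Scope ring_scope.

Section LIF.
Variable R : realType.

Definition Hea (y : R) : R := if 0 <= y then 1 else 0.

Variables (uth vreset beta : R).

(* Temporal state h^t of one LIF neuron with initial temporal input h0 and
   spatial inputs x 1, x 2, ... (x 0 is unused):
   u^t = h^{t-1} + x^t,  s^t = Hea(u^t - uth),
   h^t = vreset * s^t + beta * u^t * (1 - s^t). *)
Fixpoint lif_h (h0 : R) (x : nat -> R) (t : nat) : R :=
  match t with
  | 0 => h0
  | t'.+1 =>
      let u := lif_h h0 x t' + x t'.+1 in
      vreset * Hea (u - uth) + beta * u * (1 - Hea (u - uth))
  end.

Definition lif_u (h0 : R) (x : nat -> R) (t : nat) : R :=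
  lif_h h0 x t.-1 + x t.

Definition lif_s (h0 : R) (x : nat -> R) (t : nat) : R :=
  Hea (lif_u h0 x t - uth).

Definition layer_u N (h0 : 'I_N -> R) (x : nat -> 'I_N -> R) (t : nat)
  : 'I_N -> R := fun k => lif_u (h0 k) (fun s => x s k) t.

Definition layer_s N (h0 : 'I_N -> R) (x : nat -> 'I_N -> R) (t : nat)
  : 'I_N -> R := fun k => lif_s (h0 k) (fun s => x s k) t.

End LIF.

Definition is_density_of (R : realType) d (Omega : measurableType d)
  (P : probability Omega R) (X : Omega -> R) (p : R -> R) : Prop :=
  (forall x, 0 <= p x) /\ measurable_fun setT p /\
  forall A : set R, measurable A ->
    P (X @^-1` A) = (\int[lebesgue_measure]_(x in A) (p x)%:E)%E.

Definition neighborhood_finite (R : realType) (p : R -> R) (m : R) : Prop :=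
  exists2 eps : R, 0 < eps &
    exists M : R, forall x, m - eps <= x <= m + eps -> p x <= M.

From HB Require Import structures.
From mathcomp Require Import all_boot all_order all_algebra.
From mathcomp Require Import all_classical all_reals all_analysis.
From mathcomp Require Import ring lra measurable_realfun.
Set Implicit Arguments.
Unset Strict Implicit.
Unset Printing Implicit Defensive.
Import Order.TTheory GRing.Theory Num.Theory.
Local Open Scope classical_set_scope.
Local Open Scope ring_scope.

(* As long as the two copies of a neuron emit the same spikes, at each step
   they are either both reset or both leaked, so the distance of their
   membrane potentials obeys [D <= beta * D + eps] and stays below
   [eps / (1 - beta)].  A spike mismatch at time [T] then forces the
   unperturbed potential within [eps / (1 - beta)] of the threshold, an event
   of probability [O(eps / (1 - beta))] since the density of [u^T_k] is bounded
   near [uth]; a union bound over the [N] coordinates concludes. *)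

Lemma Hea_neq_near_threshold (R : realType) (c a b delta : R) :
  Hea (a - c) != Hea (b - c) -> `|b - a| <= delta ->
  c - delta <= a <= c + delta.
Proof.
rewrite /Hea !subr_ge0 ler_norml => neq /andP[ba ab].
case: (leP c a) neq; case: (leP c b); rewrite ?eqxx // => *.
all: by apply/andP; split; lra.
Qed.

Lemma measurable_Hea {R : realType} : measurable_fun setT (@Hea R).
Proof.
apply: measurable_fun_ifT; try exact: measurable_cst.
by apply: measurable_fun_ler => //; exact: measurable_cst.
Qed.

Section LIFDynamics.
Variables (R : realType) (uth vreset beta : R).
Local Notation lif_h := (lif_h uth vreset beta).
Local Notation lif_u := (lif_u uth vreset beta).
Local Notation lif_s := (lif_s uth vreset beta).

Lemma lif_h_succ h0 x t :
  lif_h h0 x t.+1 =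
  vreset * lif_s h0 x t.+1 + beta * lif_u h0 x t.+1 * (1 - lif_s h0 x t.+1).
Proof. by []. Qed.

Lemma lif_u_succ_dist h0 h0' x y t :
  `|lif_u h0' y t.+1 - lif_u h0 x t.+1|
  <= `|lif_h h0' y t - lif_h h0 x t| + `|y t.+1 - x t.+1|.
Proof. by rewrite /lif_u /= opprD addrACA ler_normD. Qed.

Lemma lif_h_succ_dist h0 h0' x y t : 0 <= beta ->
  lif_s h0 x t.+1 = lif_s h0' y t.+1 ->
  `|lif_h h0' y t.+1 - lif_h h0 x t.+1|
  <= beta * `|lif_u h0' y t.+1 - lif_u h0 x t.+1|.
Proof.
move=> beta0 same_spike; rewrite !lif_h_succ -same_spike.
have [->|->] : lif_s h0 x t.+1 = 1 \/ lif_s h0 x t.+1 = 0.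
  by rewrite /lif_s /Hea; case: ifP; [left | right].
- by rewrite !subrr !mulr0 !addr0 subrr normr0 mulr_ge0.
- by rewrite mulr0 subr0 !mulr1 !add0r -mulrBr normrM ger0_norm.
Qed.

Lemma lif_u_dist_le (e : R) h0 (x y : nat -> R) (T : nat) :
  0 <= beta < 1 -> (0 < T)%N ->
  (forall t, (1 <= t <= T)%N -> `|y t - x t| <= e) ->
  (forall t, (1 <= t < T)%N -> lif_s h0 x t = lif_s h0 y t) ->
  `|lif_u h0 y T - lif_u h0 x T| <= e / (1 - beta).
Proof.
move=> /andP[beta0 beta1] T0 dx same_spike.
set D := e / (1 - beta).
have e0 : 0 <= e by apply: le_trans (dx T _); rewrite ?T0 ?leqnn.
have D0 : 0 <= D by rewrite divr_ge0 // subr_ge0 ltW.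
have D_fix : D = beta * D + e by rewrite /D; field; rewrite subr_eq0 gt_eqF.
have u_step t : (t < T)%N -> `|lif_h h0 y t - lif_h h0 x t| <= beta * D ->
    `|lif_u h0 y t.+1 - lif_u h0 x t.+1| <= D.
  move=> tT dh; apply: le_trans; first exact: lif_u_succ_dist.
  by rewrite D_fix lerD // dx.
have h_bound t : (t < T)%N -> `|lif_h h0 y t - lif_h h0 x t| <= beta * D.
  elim: t => [|t IH] tT; first by rewrite subrr normr0 mulr_ge0.
  apply: le_trans (lif_h_succ_dist beta0 (same_spike t.+1 tT)) _.
  by rewrite ler_wpM2l // u_step // ?IH // ltnW.
have lt_predT : (T.-1 < T)%N by rewrite ltn_predL.
by rewrite -(prednK T0); exact: u_step lt_predT (h_bound _ lt_predT).
Qed.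

End LIFDynamics.

Section Measurability.
Variables (R : realType) (uth vreset beta : R).
Variables (d : measure_display) (Omega : measurableType d).

Lemma measurable_lif_h (h0 : Omega -> R) (x : Omega -> nat -> R) t :
  measurable_fun setT h0 -> (forall t, measurable_fun setT (x ^~ t)) ->
  measurable_fun setT (fun w => lif_h uth vreset beta (h0 w) (x w) t).
Proof.
move=> mh0 mx; elim: t => [//|t IH] /=.
have mpot : measurable_fun setT
    (fun w => lif_h uth vreset beta (h0 w) (x w) t + x w t.+1).
  exact: measurable_funD.
have mspike : measurable_fun setT
    (fun w => Hea (lif_h uth vreset beta (h0 w) (x w) t + x w t.+1 - uth)).
  apply: measurableT_comp measurable_Hea _.
  by apply: measurable_funB => //; exact: measurable_cst.
apply: measurable_funD.
  by apply: measurable_funM => //; exact: measurable_cst.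
apply: measurable_funM.
  by apply: measurable_funM => //; exact: measurable_cst.
by apply: measurable_funB => //; exact: measurable_cst.
Qed.

Lemma measurable_lif_u (h0 : Omega -> R) (x : Omega -> nat -> R) t :
  measurable_fun setT h0 -> (forall t, measurable_fun setT (x ^~ t)) ->
  measurable_fun setT (fun w => lif_u uth vreset beta (h0 w) (x w) t).
Proof.
by move=> mh0 mx; apply: measurable_funD => //; exact: measurable_lif_h.
Qed.

Lemma measurable_neqr (f g : Omega -> R) :
  measurable_fun setT f -> measurable_fun setT g ->
  measurable [set w | f w != g w].
Proof.
move=> mf mg; have := measurable_fun_eqr mf mg measurableT (Y := [set false]) I.
by rewrite setTI; congr measurable; apply/seteqP; split=> w /=;
  [exact: negbT | exact: negbTE].
Qed.

End Measurability.

Lemma measure_bigcup_ord_le (R : realType) d (T : measurableType d)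
    (mu : {content set T -> \bar R}) n (F : 'I_n -> set T) :
  (forall k, measurable (F k)) ->
  (mu (\bigcup_k F k) <= \sum_(k < n) mu (F k))%E.
Proof.
(* [content_subadditive] is stated for families indexed by [nat]. *)
move=> mF; pose G i := if insub i is Some k then F k else set0.
have GE (k : 'I_n) : G k = F k by rewrite /G valK.
rewrite (eq_bigr (fun k : 'I_n => mu (G k))) => [|k _]; last by rewrite GE.
apply: content_subadditive.
- by move=> i _; rewrite /G; case: insub.
- by apply: fin_bigcup_measurable => //; exact: finite_finset.
- move=> w [k _ Fkw]; rewrite -bigcup_mkord.
  by exists (val k) => //=; rewrite GE.
Qed.

Section Density.
Variables (R : realType) (d : measure_display) (Omega : measurableType d).
Variables (P : probability Omega R) (X : Omega -> R) (p : R -> R).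
Hypothesis X_density : is_density_of P X p.

Lemma density_itv_le (a b M : R) : a <= b ->
  (forall x, a <= x <= b -> p x <= M) ->
  (P (X @^-1` `[a, b]) <= (M * (b - a))%:E)%E.
Proof.
have [p0 [mp ->]] := X_density; last exact: measurable_itv.
move=> ab pM; have M0 : 0 <= M by apply: le_trans (pM a _); rewrite ?lexx.
apply: (@le_trans _ _ (\int[lebesgue_measure]_(x in `[a, b]) M%:E)%E).
  apply: ge0_le_integral.
  - exact: measurable_itv.
  - by move=> x _; rewrite lee_fin.
  - by apply/measurable_EFinP; exact: measurable_funS mp.
  - exact: measurable_cst.
  - by move=> x /= /[1!in_itv] /pM; rewrite lee_fin.
have leb : lebesgue_measure (`[a, b]%classic : set R) = (b - a)%:E.
  rewrite lebesgue_measure_itv /= lte_fin -EFinB.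
  by case: ltgtP ab => // -> _; rewrite subrr.
rewrite integral_cst; last exact: measurable_itv.
by rewrite [X in (_ * X)%E](_ : _ = (b - a)%:E) ?EFinM //; exact: leb.
Qed.

End Density.

(* For [delta <= eps] integrate the bound [M] of the density; beyond [eps] the
   trivial bound [1 <= delta / eps] takes over. *)
Lemma neighborhood_finite_concentration (R : realType) (p : R -> R) (m : R) :
  neighborhood_finite p m ->
  exists c : R, 0 <= c /\
  forall d (Omega : measurableType d) (P : probability Omega R)
    (X : Omega -> R),
    is_density_of P X p -> measurable_fun setT X ->
    forall delta, 0 <= delta ->
    (P (X @^-1` `[(m - delta)%R, (m + delta)%R]) <= (c * delta)%:E)%E.
Proof.
move=> [eps eps0 [M pM]].
have M0 : 0 <= Num.max M 0 by rewrite le_max lexx orbT.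
exists (2 * Num.max M 0 + eps^-1); split.
  by rewrite addr_ge0 ?mulr_ge0 // invr_ge0 ltW.
move=> d Omega P X X_density mX delta delta0.
have [delta_eps | eps_delta] := lerP delta eps.
- apply: le_trans (density_itv_le X_density (M := Num.max M 0) _ _) _.
  + lra.
  + move=> x /andP[lex xle]; rewrite le_max pM //; apply/andP; split; lra.
  + rewrite lee_fin mulrDl (_ : _ * (_ - _) = 2 * Num.max M 0 * delta).
      by rewrite lerDl mulr_ge0 // invr_ge0 ltW.
    by ring.
- apply: le_trans (probability_le1 P _) _.
    by rewrite -[X @^-1` _]setTI; apply: mX => //; exact: measurable_itv.
  have : 1 <= eps^-1 * delta by rewrite mulrC ler_pdivlMr // mul1r ltW.
  by rewrite lee_fin mulrDl => /le_trans; apply; rewrite lerDr !mulr_ge0.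
Qed.

Lemma probability_nonempty (R : realType) d (Omega : measurableType d)
  (P : probability Omega R) : [set: Omega] !=set0.
Proof.
apply/set0P/eqP => Omega0; have := probability_setT P.
by rewrite Omega0 measure0 => /eqP; rewrite eqe eq_sym oner_eq0.
Qed.

Section ThresholdMismatch.
Variables (R : realType) (d : measure_display) (Omega : measurableType d).
Variables (P : probability Omega R) (N : nat) (c delta : R).
Variables (u u' : Omega -> 'I_N -> R).
Hypothesis measurable_u : forall k, measurable_fun setT (u ^~ k).
Hypothesis measurable_u' : forall k, measurable_fun setT (u' ^~ k).
Hypothesis u_close : forall w k, `|u' w k - u w k| <= delta.

Lemma threshold_mismatch_le :
  (P [set w | (fun k => Hea (u w k - c)) <> (fun k => Hea (u' w k - c))]
   <= \sum_(k < N) P (u ^~ k @^-1` `[(c - delta)%R, (c + delta)%R]))%E.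
Proof.
pose W k := [set w | Hea (u w k - c) != Hea (u' w k - c)].
have mW k : measurable (W k).
  by apply: measurable_neqr; apply: measurableT_comp measurable_Hea _;
    apply: measurable_funB => //; exact: measurable_cst.
have -> : [set w | (fun k => Hea (u w k - c)) <> (fun k => Hea (u' w k - c))]
    = \bigcup_k W k.
  apply/seteqP; split=> w /=.
    move=> neq; have /existsNP[k /eqP neqk] :
      ~ forall k, Hea (u w k - c) = Hea (u' w k - c) by move/funext.
    by exists k.
  by move=> [k _ /eqP neqk] /(congr1 (@^~ k)).
apply: le_trans (measure_bigcup_ord_le _ mW) _; apply: lee_sum => k _.
apply: le_measure; rewrite ?inE.
- exact: mW.
- rewrite -[_ @^-1` _]setTI.
  by apply: measurable_u => //; exact: measurable_itv.
- by move=> w /Hea_neq_near_threshold; apply.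
Qed.

End ThresholdMismatch.

Theorem theorem1 (R : realType) (N : nat) (uth : R)
  (pT : 'I_N -> R -> R) :
  (forall k, neighborhood_finite (pT k) uth) ->
  exists C : R, 0 <= C /\
  forall (vreset beta : R) (T : nat) (eps : R)
    (d : measure_display) (Omega : measurableType d) (P : probability Omega R)
    (h0 : Omega -> 'I_N -> R)
    (xhat xtil : Omega -> nat -> 'I_N -> R),
  0 < beta < 1 ->
  (0 < T)%N ->
  (forall k, measurable_fun setT (fun w => h0 w k)) ->
  (forall t k, measurable_fun setT (fun w => xhat w t k)) ->
  (forall t k, measurable_fun setT (fun w => xtil w t k)) ->
  (* each coordinate of u^t = h^{t-1} + x^t follows a uth-NFD, t = 1..T *)
  (forall t k, (1 <= t <= T)%N ->
     exists p : R -> R,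
       is_density_of P (fun w => layer_u uth vreset beta (h0 w) (xhat w) t k) p
       /\ neighborhood_finite p uth) ->
  (* the density of the coordinates of u^T is pT *)
  (forall k,
     is_density_of P (fun w => layer_u uth vreset beta (h0 w) (xhat w) T k)
       (pT k)) ->
  (forall w t k, (1 <= t <= T)%N -> `|xtil w t k - xhat w t k| <= eps) ->
  (forall w t, (1 <= t < T)%N ->
     layer_s uth vreset beta (h0 w) (xhat w) t
     = layer_s uth vreset beta (h0 w) (xtil w) t) ->
  (P [set w | layer_s uth vreset beta (h0 w) (xhat w) T
              <> layer_s uth vreset beta (h0 w) (xtil w) T]
   <= (C * (N%:R * (eps / (1 - beta))))%:E)%E.
Proof.
move=> pT_nfd.
have /choice[c c_spec] := fun k => neighborhood_finite_concentration (pT_nfd k).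
pose C := \big[Num.max/0]_(k < N) c k.
exists C; split; first exact: bigmax_ge_id.
(* only the density of [u^T] is needed *)
move=> vreset beta T eps d Omega P h0 xhat xtil /andP[beta0 beta1] T0 mh0
  mxhat mxtil _ pT_density x_close same_spikes.
set delta := eps / (1 - beta).
pose u x w k := layer_u uth vreset beta (h0 w) (x w) T k.
have mpot x : (forall t k, measurable_fun setT (x ^~ t ^~ k)) ->
    forall k, measurable_fun setT (u x ^~ k).
  by move=> mx k; apply: measurable_lif_u => // t; exact: mx.
have u_close w k : `|u xtil w k - u xhat w k| <= delta.
  apply: lif_u_dist_le => //; first by rewrite ltW.
    by move=> t /(x_close w t k).
  by move=> t /(same_spikes w t) /(congr1 (@^~ k)).
have [w0 _] := probability_nonempty P.
have delta0 k : 0 <= delta := le_trans (normr_ge0 _) (u_close w0 k).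
apply: le_trans
  (threshold_mismatch_le P uth (mpot _ mxhat) (mpot _ mxtil) u_close) _.
apply: le_trans (_ : _ <= \sum_(k < N) (c k * delta)%:E)%E _.
  apply: lee_sum => k _.
  exact: (c_spec k).2 _ _ _ _ (pT_density k) (mpot _ mxhat k) _ (delta0 k).
rewrite sumEFin lee_fin.
apply: le_trans (_ : \sum_(k < N) C * delta <= _).
  apply: ler_sum => k _.
  by apply: ler_wpM2r; [exact: delta0 | exact: le_bigmax].
by rewrite sumr_const card_ord -mulrnAr mulr_natl.
Qed.
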